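(* Let $\widehat{G}$ be a signed complete bigraph with bipartition $(X,Y)$. If $\widehat{G}$ has a signed simplicial edge, then $\widehat{G}$ is a chordal signed bigraph.
   Context: A signed graph is a finite simple graph each of whose edges is assigned a sign, positive or negative. A signed bigraph is a signed graph whose underlying graph is bipartite, with bipartition $(X,Y)$; it is a signed complete bigraph if the underlying graph is a complete bipartite graph. An induced subgraph is obtained by deleting vertices only (signs are inherited). A signed graph is positive if all its edges are positive. In a bigraph with bipartition $(X,Y)$, a subgraph $H$ is a biclique if every vertex of $V(H)\cap X$ is adjacent to every vertex of $V(H)\cap Y$. For an edge $uv$, $N(uv)=(N(u)\cup N(v))\setminus\{u,v\}$. An edge $uv$ of a signed bigraph is signed simplicial if $N(uv)$ induces a positive biclique. A signed bigraph $\widehat G$ is chordal (a chordal signed bigraph) if its edges can be ordered $e_1,\dots,e_m$ so that each $e_i$ is signed simplicial in the signed bigraph $\widehat G-\{e_1,\dots,e_{i-1}\}$ obtained by deleting these edges (but no vertices). *)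

From mathcomp Require Import all_boot.
Set Implicit Arguments. Unset Strict Implicit. Unset Printing Implicit Defensive.

(* A signed graph on a finite vertex type V is given by its edge set
   E : {set {set V}} (each edge an unordered pair {u,v}) and a sign
   function sg : {set V} -> bool (true = positive), only relevant on E.
   The bipartition (X,Y) is given by X : {set V}, with Y = ~: X. *)

Section SignedBigraphs.
Variable V : finType.

Definition is_bigraph (E : {set {set V}}) (X : {set V}) : Prop :=
  forall e, e \in E -> exists x y, [/\ x \in X, y \notin X & e = [set x; y]].

Definition is_complete_bigraph (E : {set {set V}}) (X : {set V}) : Prop :=
  is_bigraph E X /\
  (forall x y, x \in X -> y \notin X -> [set x; y] \in E).

Definition nbhd (E : {set {set V}}) (u : V) : {set V} :=
  [set w | [set u; w] \in E].

Definition edge_nbhd (E : {set {set V}}) (e : {set V}) : {set V} :=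
  (\bigcup_(w in e) nbhd E w) :\: e.

Definition induces_biclique (E : {set {set V}}) (X S : {set V}) : Prop :=
  forall x y, x \in S -> y \in S -> x \in X -> y \notin X -> [set x; y] \in E.

Definition induces_positive (E : {set {set V}}) (sg : {set V} -> bool)
  (S : {set V}) : Prop :=
  forall f, f \in E -> f \subset S -> sg f.

Definition signed_simplicial (E : {set {set V}}) (X : {set V})
  (sg : {set V} -> bool) (e : {set V}) : Prop :=
  e \in E /\
  induces_biclique E X (edge_nbhd E e) /\ induces_positive E sg (edge_nbhd E e).

Definition chordal_signed_bigraph (E : {set {set V}}) (X : {set V})
  (sg : {set V} -> bool) : Prop :=
  exists s : seq {set V},
    [/\ uniq s, (forall e, (e \in s) = (e \in E)) &
        forall i, i < size s ->
          signed_simplicial (E :\: [set f in take i s]) X sg (nth set0 s i)].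

End SignedBigraphs.

From mathcomp Require Import all_boot.
Set Implicit Arguments. Unset Strict Implicit. Unset Printing Implicit Defensive.

(* Rank the vertices so that x comes first and y second, and delete the edges
   vertex by vertex in rank order, starting with the given simplicial edge xy.
   When an edge uw is deleted with u of least rank among the vertices still
   covered, every vertex of N(uw) ranks above u, and all edges between such
   vertices are still present, so N(uw) induces a biclique.  Moreover x and y
   never lie in N(uw) (y could only do so through the deleted edge xy), so N(uw)
   is contained in N(xy), which induces a positive subgraph. *)

Section Chordal.
Variables (V : finType) (X : {set V}) (sg : {set V} -> bool).

Lemma chordal_set0 : chordal_signed_bigraph set0 X sg.
Proof. by exists [::]; split=> // e; rewrite inE. Qed.

Lemma chordal_setD1 F e :
  signed_simplicial F X sg e -> chordal_signed_bigraph (F :\ e) X sg ->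
  chordal_signed_bigraph F X sg.
Proof.
move=> simp_e [s [uniq_s mem_s simp_s]]; have eF := simp_e.1.
exists (e :: s); split.
- by rewrite /= uniq_s mem_s !inE eqxx.
- by move=> f; rewrite inE mem_s !inE; case: eqVneq => // ->.
case=> [_ | i /simp_s] /=.
  by rewrite (_ : [set f in [::]] = set0) ?setD0 //; apply/setP => f; rewrite !inE.
congr signed_simplicial; apply/setP => f; rewrite !inE.
by case: (f == e); case: (f \in take i s).
Qed.

Lemma chordal_greedy (P : {set {set V}} -> Prop) :
  (forall F, P F -> F != set0 ->
     exists2 e, signed_simplicial F X sg e & P (F :\ e)) ->
  forall F, P F -> chordal_signed_bigraph F X sg.
Proof.
move=> step F; have [n] := ubnP #|F|; elim: n F => // n IH F ltFn PF.
have [->|F0] := eqVneq F set0; first exact: chordal_set0.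
have [e simp_e Pe] := step F PF F0.
rewrite (cardsD1 e) simp_e.1 in ltFn.
exact: chordal_setD1 simp_e (IH _ ltFn Pe).
Qed.

End Chordal.

Lemma mem_edge_nbhd2 (V : finType) (F : {set {set V}}) u v z :
  z \in edge_nbhd F [set u; v] =
  [&& z != u, z != v & ([set u; z] \in F) || ([set v; z] \in F)].
Proof. by rewrite /edge_nbhd bigcup_setU !big_set1 !inE negb_or andbA. Qed.

Section CompleteBigraph.
Variables (V : finType) (E : {set {set V}}) (X : {set V}).
Hypothesis complete : is_complete_bigraph E X.

Definition opposite (p q : V) := (p \in X) != (q \in X).

Lemma complete_bigraph_edgeE p q : ([set p; q] \in E) = opposite p q.
Proof.
apply/idP/idP => [/complete.1 [a [b [aX bX eq_ab]]] | ].
  have ab : a != b by apply: contraNneq bX => <-.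
  have mem z : z \in [set a; b] -> (z \in X) = (z == a).
    by rewrite !inE => /orP[]/eqP->; rewrite ?aX ?(negbTE bX) ?eqxx // eq_sym (negbTE ab).
  rewrite /opposite !mem -?eq_ab ?inE ?eqxx ?orbT //.
  have: a \in [set p; q] /\ b \in [set p; q] by rewrite eq_ab !inE !eqxx orbT.
  rewrite !inE; case: eqVneq => [<-|pa]; case: eqVneq => [<-|qa] //=.
    by rewrite !orbb eq_sym (negbTE ab) => -[].
  by case.
rewrite /opposite; case pX: (p \in X); case qX: (q \in X) => // _.
  by apply: complete.2; rewrite ?qX.
by rewrite setUC; apply: complete.2; rewrite ?pX.
Qed.

Lemma complete_bigraph_edge_at f u :
  f \in E -> u \in f -> exists2 w, opposite u w & f = [set u; w].
Proof.
case/complete.1 => a [b [aX bX ->]]; have ab : opposite a b.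
  by rewrite /opposite aX (negbTE bX).
rewrite !inE => /orP[]/eqP->; first by exists b.
by exists a; [rewrite /opposite eq_sym | rewrite setUC].
Qed.

End CompleteBigraph.

Section OneSimplicialEdge.
Variables (V : finType) (E : {set {set V}}) (X : {set V}) (sg : {set V} -> bool).
Variables (x y : V) (r : V -> nat).
Hypothesis complete : is_complete_bigraph E X.
Hypothesis xy_simplicial : signed_simplicial E X sg [set x; y].
Hypothesis r_inj : injective r.
Hypothesis r_x : forall w, w != x -> r x < r w.
Hypothesis r_y : forall w, w != x -> w != y -> r y < r w.

Let edgeE := complete_bigraph_edgeE complete.

Lemma xy_opposite : opposite X x y.
Proof. by rewrite -edgeE xy_simplicial.1. Qed.

Lemma r_x_min w : r x <= r w.
Proof. by have [->|/r_x/ltnW] := eqVneq w x. Qed.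

Lemma below_y_eq_x u : r u < r y -> u = x.
Proof.
have [// | ux] := eqVneq u x; have [-> | uy] := eqVneq u y; first by rewrite ltnn.
by move/(ltn_trans (r_y ux uy)); rewrite ltnn.
Qed.

Lemma mem_edge_nbhd_xy t : t != x -> t != y -> t \in edge_nbhd E [set x; y].
Proof.
move=> tx ty; rewrite mem_edge_nbhd2 tx ty !edgeE.
by move: xy_opposite; rewrite /opposite; case: (x \in X); case: (y \in X); case: (t \in X).
Qed.

Definition closed_above (F : {set {set V}}) :=
  forall f z p q, f \in F -> z \in f -> r z < r p -> r z < r q ->
  opposite X p q -> [set p; q] \in F.

Definition admissible (F : {set {set V}}) := F \subset E :\ [set x; y] /\ closed_above F.

Lemma admissible_edge F f : admissible F -> f \in F -> f \in E.
Proof. by move=> [FE _] /(subsetP FE); rewrite inE => /andP[]. Qed.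

Lemma admissible_start : admissible (E :\ [set x; y]).
Proof.
split=> // f z p q _ _ zp zq opq; rewrite !inE edgeE opq andbT.
have xpq : x \notin [set p; q].
  rewrite !inE; apply/norP; split; apply/eqP => ex;
    by move: zp zq; rewrite -ex !ltnNge r_x_min.
by apply: contraNneq xpq => ->; rewrite !inE eqxx.
Qed.

Section LowestEdge.
Variables (F : {set {set V}}) (u w : V).
Hypothesis F_admissible : admissible F.
Hypothesis uwF : [set u; w] \in F.
Hypothesis u_lowest : forall z, z \in cover F -> r u <= r z.

Lemma edge_nbhd_above z : z \in edge_nbhd F [set u; w] -> r u < r z.
Proof.
rewrite mem_edge_nbhd2 => /and3P[zu _ zF]; rewrite ltn_neqAle (inj_eq r_inj) eq_sym zu.
apply: u_lowest; apply/bigcupP.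
by case/orP: zF => zF; [exists [set u; z] | exists [set w; z]]; rewrite // !inE eqxx orbT.
Qed.

Lemma edge_nbhd_lowest_sub : edge_nbhd F [set u; w] \subset edge_nbhd E [set x; y].
Proof.
apply/subsetP => t tN; have ut := edge_nbhd_above tN.
apply: mem_edge_nbhd_xy; apply/eqP => tE; subst t.
  by move: (leq_ltn_trans (r_x_min u) ut); rewrite ltnn.
have ux := below_y_eq_x ut; subst u.
have FE f : f \in F -> f \in E :\ [set x; y] := subsetP F_admissible.1 f.
move: tN; rewrite mem_edge_nbhd2 => /and3P[_ _ /orP[/FE | /FE]].
  by rewrite !inE eqxx.
rewrite !inE edgeE => /andP[_ wy].
have := FE _ uwF; rewrite !inE edgeE => /andP[_ xw].
by move: xy_opposite xw wy; rewrite /opposite;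
   case: (x \in X); case: (y \in X); case: (w \in X).
Qed.

Lemma lowest_edge_simplicial : signed_simplicial F X sg [set u; w].
Proof.
split=> //; split=> [p q pN qN pX qX | f fF fN].
  apply: (F_admissible.2 _ u _ _ uwF); rewrite ?inE ?eqxx ?edge_nbhd_above //.
  by rewrite /opposite pX (negbTE qX).
apply: xy_simplicial.2.2; first exact: admissible_edge F_admissible fF.
exact: subset_trans fN edge_nbhd_lowest_sub.
Qed.

Lemma admissible_setD1 : admissible (F :\ [set u; w]).
Proof.
split; first by apply: subset_trans F_admissible.1; apply: subsetDl.
move=> f z p q; rewrite !inE => /andP[_ fF] zf zp zq opq.
rewrite (F_admissible.2 f z p q fF zf zp zq opq) andbT.
have uz : r u <= r z by apply: u_lowest; apply/bigcupP; exists f.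
apply/eqP => pq_uw; have: u \in [set p; q] by rewrite pq_uw !inE eqxx.
by rewrite !inE => /orP[]/eqP eq_u; rewrite -eq_u in zp zq; rewrite leqNgt ?zp ?zq in uz.
Qed.

End LowestEdge.

Lemma admissible_step F : admissible F -> F != set0 ->
  exists2 e, signed_simplicial F X sg e & admissible (F :\ e).
Proof.
move=> F_adm /set0Pn[f0 f0F].
have [a [b [_ _ f0_eq]]] := complete.1 _ (admissible_edge F_adm f0F).
have a_cov : a \in cover F by apply/bigcupP; exists f0; rewrite // f0_eq !inE eqxx.
case: (arg_minnP r a_cov) => u /bigcupP[e eF ue] u_lowest.
have [w _ e_eq] := complete_bigraph_edge_at complete (admissible_edge F_adm eF) ue.
rewrite e_eq in eF; exists [set u; w].
  exact: lowest_edge_simplicial F_adm eF u_lowest.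
exact: admissible_setD1 w F_adm u_lowest.
Qed.

Lemma chordal_of_simplicial_edge : chordal_signed_bigraph E X sg.
Proof.
apply: chordal_setD1 xy_simplicial _.
exact: chordal_greedy admissible_step _ admissible_start.
Qed.

End OneSimplicialEdge.

Lemma exists_rank_first_second (V : finType) (x y : V) :
  exists r : V -> nat, [/\ injective r, forall w, w != x -> r x < r w &
                                        forall w, w != x -> w != y -> r y < r w].
Proof.
pose r w := if w == x then 0 else if w == y then 1 else (enum_rank w).+2.
exists r; split=> [p q | w | w]; rewrite /r ?eqxx.
- by do 4!case: ifP => [/eqP-> | _] //; case=> /ord_inj/enum_rank_inj.
- by move/negbTE->; case: ifP.
- by move=> /negbTE-> /negbTE->; case: ifP.
Qed.

Theorem lemma2p1 (V : finType) (E : {set {set V}}) (X : {set V})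
    (sg : {set V} -> bool) :
  is_complete_bigraph E X ->
  (exists e, signed_simplicial E X sg e) ->
  chordal_signed_bigraph E X sg.
Proof.
move=> complete [e e_simplicial].
have [x [y [_ _ e_eq]]] := complete.1 e e_simplicial.1.
have [r [r_inj r_x r_y]] := exists_rank_first_second x y.
rewrite e_eq in e_simplicial.
exact: chordal_of_simplicial_edge complete e_simplicial r_inj r_x r_y.
Qed.
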